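(* For every positive integer $n$, $$\sum_{k=1}^{n} \frac{2^k}{k} = \frac{2^n}{\mathrm{lcm}(1,2,\dots,n)} \cdot N_n,$$ where $N_n := \mathrm{lcm}\left\{\binom{n-1}{0}, \binom{n-1}{1}, \dots, \binom{n-1}{n-1}\right\} \cdot \sum_{k=0}^{n-1} \binom{n-1}{k}^{-1}$ is a positive integer. *)

From mathcomp Require Import all_boot all_order all_algebra.
Set Implicit Arguments. Unset Strict Implicit. Unset Printing Implicit Defensive.
Import Order.TTheory GRing.Theory Num.Theory.

Definition lcm_upto (n : nat) : nat := \big[lcmn/1%N]_(1 <= i < n.+1) i.

Definition lcm_binom (n : nat) : nat := \big[lcmn/1%N]_(k < n) 'C(n.-1, k).

Definition N_ (n : nat) : rat :=
  ((lcm_binom n)%:R * \sum_(k < n) ('C(n.-1, k)%:R)^-1)%R.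

From mathcomp Require Import all_boot all_algebra.
From mathcomp Require Import zify ring lra.
Set Implicit Arguments. Unset Strict Implicit. Unset Printing Implicit Defensive.
Import GRing.Theory Num.Theory.

(* The denominators [leibniz M k = (M+1) C(M,k)] of Leibniz's harmonic triangle
   satisfy 1/L(M,k) = 1/L(M+1,k) + 1/L(M+1,k+1).  Summing row M+1 in two ways
   gives S(M+1) = S(M)/2 + 1/(M+2) for the row sums S(M) of the 1/L(M,k), hence
   sum_(k=1..n) 2^k/k = 2^n S(n-1) by induction.  Read as divisibilities, the
   same relation shows that the common multiples of row n-1 are exactly those of
   its left edge L(j,0) = j+1, i.e. of 1, ..., n: so lcm(1..n) = n lcm_k C(n-1,k),
   and N_n = sum_k lcm_j C(n-1,j) / C(n-1,k) is a positive integer. *)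

(* [c * b = a * (b + c)] is 1/a = 1/b + 1/c without fractions. *)
Lemma dvdn_harmonic_sum a b c L : 0 < b -> 0 < c -> c * b = a * (b + c) ->
  b %| L -> c %| L -> a %| L.
Proof.
move=> b0 c0 abc /dvdnP[u ->] /dvdnP[v Lv].
have bc0 : 0 < b * c by rewrite muln_gt0 b0.
apply/dvdnP; exists (u + v); apply/eqP; rewrite -(eqn_pmul2r bc0); apply/eqP.
nia.
Qed.

Lemma dvdn_harmonic_diff a b c L : 0 < a -> 0 < b -> c * b = a * (b + c) ->
  a %| L -> b %| L -> c %| L.
Proof.
move=> a0 b0 abc /dvdnP[u Lu] /dvdnP[v Lv].
have ab0 : 0 < a * b by rewrite muln_gt0 a0.
apply/dvdnP; exists (u - v); apply/eqP; rewrite -(eqn_pmul2r ab0); apply/eqP.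
nia.
Qed.

Definition leibniz M k := M.+1 * 'C(M, k).

Lemma leibniz_gt0 M k : k <= M -> 0 < leibniz M k.
Proof. by move=> kM; rewrite muln_gt0 bin_gt0. Qed.

Lemma leibniz0 M : leibniz M 0 = M.+1.
Proof. by rewrite /leibniz bin0 muln1. Qed.

Lemma leibnizn M : leibniz M M = M.+1.
Proof. by rewrite /leibniz binn muln1. Qed.

Lemma leibnizS M k :
  leibniz M.+1 k.+1 * leibniz M.+1 k = leibniz M k * (leibniz M.+1 k + leibniz M.+1 k.+1).
Proof.
rewrite /leibniz; set C := 'C(M.+1, k); set C' := 'C(M.+1, k.+1).
have [kM | Mk] := leqP k M.+1; last by rewrite /C /C' !bin_small ?muln0 ?mul0n; lia.
have -> : M.+1 * 'C(M, k) * (M.+2 * C + M.+2 * C') =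
    M.+2 * ((M.+1 * 'C(M, k)) * C + (M.+1 * 'C(M, k)) * C') by lia.
have diag := mul_bin_diag M.+1 k; have down := mul_bin_down M.+1 k.
rewrite /= -/C -/C' in diag down; rewrite {1}diag down.
nia.
Qed.

Lemma leibniz_row_dvd_pred L M :
  (forall k, k <= M.+1 -> leibniz M.+1 k %| L) -> forall k, k <= M -> leibniz M k %| L.
Proof.
move=> row k kM.
apply: (dvdn_harmonic_sum (b := leibniz M.+1 k) (c := leibniz M.+1 k.+1)).
- exact: leibniz_gt0 (leqW kM).
- exact: leibniz_gt0.
- exact: leibnizS.
- exact: row (leqW kM).
- exact: row.
Qed.

Lemma leibniz_rows_dvd L M : (forall k, k <= M -> leibniz M k %| L) ->
  forall j k, j <= M -> k <= j -> leibniz j k %| L.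
Proof.
elim: M => [|M IH] row j k.
  by rewrite leqn0 => /eqP-> /row.
rewrite leq_eqVlt => /orP[/eqP-> /row // | jM].
exact: IH (leibniz_row_dvd_pred row) j k jM.
Qed.

Lemma leibniz_row_dvd_succ L M : (forall k, k <= M -> leibniz M k %| L) ->
  M.+2 %| L -> forall k, k <= M.+1 -> leibniz M.+1 k %| L.
Proof.
move=> row ML; elim=> [|k IH] kM; first by rewrite leibniz0.
apply: (dvdn_harmonic_diff (a := leibniz M k) (b := leibniz M.+1 k)).
- exact: leibniz_gt0.
- exact: leibniz_gt0 (ltnW kM).
- exact: leibnizS.
- exact: row.
- exact: IH (ltnW kM).
Qed.

Lemma lcm_upto0 : lcm_upto 0 = 1.
Proof. by rewrite /lcm_upto big_geq. Qed.

Lemma lcm_uptoS n : lcm_upto n.+1 = lcmn (lcm_upto n) n.+1.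
Proof. by rewrite /lcm_upto big_nat_recr. Qed.

Lemma dvdn_lcm_upto n j : 0 < j <= n -> j %| lcm_upto n.
Proof.
elim: n => [|n IH] /andP[j0 jn]; first by case: j j0 jn.
rewrite lcm_uptoS; move: jn; rewrite leq_eqVlt => /orP[/eqP-> | jn].
  exact: dvdn_lcmr.
by apply: dvdn_trans (dvdn_lcml _ _); apply: IH; rewrite j0.
Qed.

Lemma lcm_upto_dvd n L : (forall j, 0 < j <= n -> j %| L) -> lcm_upto n %| L.
Proof.
elim: n => [|n IH] dvdL; first by rewrite lcm_upto0 dvd1n.
rewrite lcm_uptoS dvdn_lcm; apply/andP; split; last by apply: dvdL; rewrite leqnn.
by apply: IH => j /andP[j0 jn]; apply: dvdL; rewrite j0 leqW.
Qed.

Lemma leibniz_dvd_lcm_upto M k : k <= M -> leibniz M k %| lcm_upto M.+1.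
Proof.
elim: M k => [|M IH] k kM.
  by move: kM; rewrite leqn0 => /eqP->; rewrite leibniz0 lcm_uptoS dvdn_lcmr.
apply: leibniz_row_dvd_succ kM => [j jM|].
  by rewrite lcm_uptoS; apply: dvdn_trans (IH j jM) (dvdn_lcml _ _).
by rewrite lcm_uptoS dvdn_lcmr.
Qed.

Lemma lcm_upto_leibniz n : lcm_upto n.+1 = n.+1 * lcm_binom n.+1.
Proof.
apply/eqP; rewrite eqn_dvd; apply/andP; split.
  apply: lcm_upto_dvd => j /andP[j0 jn].
  rewrite -(prednK j0) -leibniz0.
  apply: (leibniz_rows_dvd (M := n)) => // [k kn|]; last by rewrite -ltnS prednK.
  by rewrite /leibniz dvdn_pmul2l // (biglcmn_sup (Ordinal (kn : k < n.+1))).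
have n1_dvd : n.+1 %| lcm_upto n.+1 by apply: dvdn_lcm_upto; rewrite leqnn.
rewrite mulnC -dvdn_divRL //; apply/dvdn_biglcmP => k _.
by rewrite dvdn_divRL // mulnC; apply: leibniz_dvd_lcm_upto; rewrite -ltnS ltn_ord.
Qed.

Local Open Scope ring_scope.

Lemma harmonic_natr {F : numFieldType} a b c : (0 < b)%N -> (0 < c)%N ->
  (c * b = a * (b + c))%N -> a%:R^-1 = b%:R^-1 + c%:R^-1 :> F.
Proof.
move=> b0 c0 /(congr1 (GRing.natmul (1 : F))); rewrite !natrM natrD => abc.
have bc0 : b%:R + c%:R != 0 :> F by rewrite -natrD pnatr_eq0 -lt0n addn_gt0 b0.
have -> : a%:R = c%:R * b%:R / (b%:R + c%:R) :> F by rewrite abc mulfK.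
by field; rewrite bc0 !pnatr_eq0 -!lt0n b0 c0.
Qed.

Definition leibniz_inv_sum M : rat := \sum_(k < M.+1) (leibniz M k)%:R^-1.

Lemma leibniz_inv_sumE M :
  leibniz_inv_sum M = M.+1%:R^-1 * \sum_(k < M.+1) ('C(M, k)%:R)^-1.
Proof. by rewrite mulr_sumr; apply: eq_bigr => k _; rewrite natrM invfM. Qed.

Lemma leibniz_inv_rec M k : (k <= M)%N ->
  (leibniz M k)%:R^-1 = (leibniz M.+1 k)%:R^-1 + (leibniz M.+1 k.+1)%:R^-1 :> rat.
Proof.
by move=> kM; apply: (harmonic_natr _ _ (leibnizS M k)); apply: leibniz_gt0 => //; exact: leqW.
Qed.

Lemma leibniz_inv_sumS M : leibniz_inv_sum M.+1 = leibniz_inv_sum M / 2 + M.+2%:R^-1.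
Proof.
have pascal : leibniz_inv_sum M = \sum_(k < M.+1) (leibniz M.+1 k)%:R^-1
                                + \sum_(k < M.+1) (leibniz M.+1 k.+1)%:R^-1.
  by rewrite -big_split; apply: eq_bigr => k _; apply: leibniz_inv_rec; rewrite -ltnS.
have drop_last : leibniz_inv_sum M.+1 = \sum_(k < M.+1) (leibniz M.+1 k)%:R^-1 + M.+2%:R^-1.
  by rewrite /leibniz_inv_sum big_ord_recr /= leibnizn.
have drop_first : leibniz_inv_sum M.+1 = M.+2%:R^-1 + \sum_(k < M.+1) (leibniz M.+1 k.+1)%:R^-1.
  by rewrite /leibniz_inv_sum big_ord_recl leibniz0.
rewrite pascal; move: drop_last drop_first; set m := M.+2%:R^-1; lra.
Qed.

Lemma sum_exp2_div m :
  \sum_(1 <= k < m.+2) (2 ^+ k : rat) / k%:R = 2 ^+ m.+1 * leibniz_inv_sum m.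
Proof.
elim: m => [|m IH].
  by rewrite big_nat1 /leibniz_inv_sum big_ord1 leibniz0.
rewrite big_nat_recr //= IH leibniz_inv_sumS !exprS.
move: (2 ^+ m) (leibniz_inv_sum m) => p s.
by field; rewrite -natrD pnatr_eq0.
Qed.

Lemma lcm_binom_gt0 n : (0 < lcm_binom n)%N.
Proof.
apply: (big_ind (fun x => 0 < x)%N) => // [x y x0 y0 | k _].
  by rewrite lcmn_gt0 x0.
by rewrite bin_gt0 -ltnS prednK // (leq_ltn_trans (leq0n k)).
Qed.

Lemma N_natE n : N_ n = (\sum_(k < n) lcm_binom n %/ 'C(n.-1, k))%:R.
Proof.
rewrite /N_ natr_sum mulr_sumr; apply: eq_bigr => k _.
have C0 : (0 < 'C(n.-1, k))%N by rewrite bin_gt0 -ltnS prednK // (leq_ltn_trans (leq0n k)).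
by rewrite natr_div // ?(biglcmn_sup k) // unitfE pnatr_eq0 -lt0n.
Qed.

Theorem mainTheorem8 (n : nat) (hn : (0 < n)%N) :
  \sum_(1 <= k < n.+1) ((2 ^+ k : rat) / k%:R)
    = (2 ^+ n / (lcm_upto n)%:R) * N_ n
  /\ exists m : nat, (0 < m)%N /\ N_ n = m%:R.
Proof.
case: n hn => // m _; split.
  have L0 : (lcm_binom m.+1)%:R != 0 :> rat by rewrite pnatr_eq0 -lt0n lcm_binom_gt0.
  rewrite sum_exp2_div leibniz_inv_sumE /N_ lcm_upto_leibniz natrM.
  by field; rewrite L0 addrC natr1 pnatr_eq0.
exists (\sum_(k < m.+1) lcm_binom m.+1 %/ 'C(m, k))%N; split; last exact: N_natE.
by rewrite big_ord_recl bin0 divn1 ltn_addr ?lcm_binom_gt0.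
Qed.
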